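(* Let $\delta,D\ge0$ and let $(X_n,x_n,\Gamma_n)\in\mathcal{M}(\delta,D)$ converge in the equivariant pointed Gromov–Hausdorff sense to $(X_\infty,x_\infty,\Gamma_\infty)$, with $X_\infty$ proper and $\Gamma_\infty$ closed in $\mathrm{Isom}(X_\infty)$. Let $Y_n=\mathrm{QC\text{-}Hull}(\Lambda(\Gamma_n))$. Then for every $0<r\le R$, $\sup_{n\in\mathbb N}\mathrm{Pack}_{Y_n}(R,r)<+\infty$.
   Context: For $Z$ a subset of a metric space, $\mathrm{Pack}(Z,r)$ is the maximal cardinality of a $2r$-separated subset of $Z$; for $Y\subseteq X$, $\mathrm{Pack}_Y(R,r)=\sup_{y\in Y}\mathrm{Pack}(\overline B(y,R)\cap Y,r)$. Gromov product $(y,z)_x=\frac12(d(x,y)+d(x,z)-d(y,z))$; $X$ is $\delta$-hyperbolic if $(x,z)_w\geq\min\{(x,y)_w,(y,z)_w\}-\delta$ for all points. $\Lambda(\Gamma)$: accumulation points in the Gromov boundary of $\Gamma x$; elementary means $\#\Lambda(\Gamma)\le2$. $\mathrm{QC\text{-}Hull}(C)$: union of geodesic lines with both endpoints in $C$. Quasiconvex-cocompact with codiameter $\le D$: for all $y,y'\in\mathrm{QC\text{-}Hull}(\Lambda(\Gamma))$ there is $g\in\Gamma$ with $d(gy,y')\le D$. $\mathcal{M}(\delta,D)$: triples $(X,x,\Gamma)$, $X$ proper geodesic $\delta$-hyperbolic, $\Gamma\le\mathrm{Isom}(X)$ discrete, torsion-free, non-elementary, quasiconvex-cocompact with codiameter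 $\le D$, $x\in\mathrm{QC\text{-}Hull}(\Lambda(\Gamma))$. Equivariant pointed Gromov–Hausdorff convergence: with $\Sigma_R(\Gamma,x)=\{g\in\Gamma:d(x,gx)\le R\}$, an equivariant $\varepsilon$-approximation between $(X,x,\Gamma)$ and $(Y,y,\Lambda)$ is $(f,\varphi,\psi)$ with $f:B(x,1/\varepsilon)\to B(y,1/\varepsilon)$, $f(x)=y$, $|d(f(a),f(b))-d(a,b)|<\varepsilon$, image $\varepsilon$-dense in $B(y,1/\varepsilon)$; $\varphi:\Sigma_{1/\varepsilon}(\Gamma,x)\to\Sigma_{1/\varepsilon}(\Lambda,y)$ with $d(f(ga),\varphi(g)f(a))<\varepsilon$ whenever $a,ga\in B(x,1/\varepsilon)$; $\psi:\Sigma_{1/\varepsilon}(\Lambda,y)\to\Sigma_{1/\varepsilon}(\Gamma,x)$ with $d(f(\psi(g)a),gf(a))<\varepsilon$ whenever $a,\psi(g)a\in B(x,1/\varepsilon)$. Convergence means that for every $\varepsilon>0$ such approximations exist for all large $n$. *)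

From Stdlib Require Import Reals Lra List.
Open Scope R_scope.

Record MetricSpace := {
  mpt :> Type;
  mdist : mpt -> mpt -> R;
  mdist_refl : forall a, mdist a a = 0;
  mdist_sep : forall a b, mdist a b = 0 -> a = b;
  mdist_sym : forall a b, mdist a b = mdist b a;
  mdist_tri : forall a b c, mdist a c <= mdist a b + mdist b c }.

Arguments mdist {m} _ _.

Section Defs.
Variable X : MetricSpace.

(** Proper: closed balls are compact (sequential compactness, metric case). *)
Definition proper_space : Prop :=
  forall (c : X) (rad : R) (u : nat -> X),
    (forall n, mdist c (u n) <= rad) ->
    exists (phi : nat -> nat) (l : X),
      (forall n, (phi n < phi (S n))%nat) /\
      forall eps, 0 < eps -> exists N, forall n, (N <= n)%nat -> mdist (u (phi n)) l < eps.

Definition geodesic_space : Prop :=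
  forall a b : X, exists gam : R -> X,
    gam 0 = a /\ gam (mdist a b) = b /\
    forall s t, 0 <= s <= mdist a b -> 0 <= t <= mdist a b ->
      mdist (gam s) (gam t) = Rabs (s - t).

Definition gprod (w y z : X) : R := (mdist w y + mdist w z - mdist y z) / 2.

Definition hyperbolic (delta : R) : Prop :=
  forall a b c w : X, gprod w a c >= Rmin (gprod w a b) (gprod w b c) - delta.

Definition isometry (f : X -> X) : Prop :=
  (forall a b, mdist (f a) (f b) = mdist a b) /\ (forall b, exists a, f a = b).

Definition isom_subgroup (G : (X -> X) -> Prop) : Prop :=
  (forall f, G f -> isometry f) /\
  G (fun z => z) /\
  (forall f g, G f -> G g -> G (fun z => f (g z))) /\
  (forall f, G f -> exists g, G g /\ forall z, g (f z) = z /\ f (g z) = z) /\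
  (forall f g, G f -> (forall z, f z = g z) -> G g).

(** Discrete in the compact-open topology (uniform convergence on compacta;
    for proper X closed balls form a cofinal family of compacta): the
    identity is isolated in G. *)
Definition discrete_subgroup (G : (X -> X) -> Prop) : Prop :=
  exists (p : X) (Rad eps : R), 0 < eps /\
    forall g, G g -> (forall y, mdist p y <= Rad -> mdist (g y) y < eps) ->
      forall y, g y = y.

(** Closed in Isom(X) for the compact-open topology. *)
Definition closed_subgroup (p : X) (G : (X -> X) -> Prop) : Prop :=
  forall g, isometry g ->
    (forall Rad eps, 0 < eps -> exists h, G h /\
        forall y, mdist p y <= Rad -> mdist (h y) (g y) < eps) ->
    G g.

Definition torsion_free (G : (X -> X) -> Prop) : Prop :=
  forall g n, G g -> (1 <= n)%nat -> (forall z, Nat.iter n g z = z) ->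
    forall z, g z = z.

(** Gromov boundary: sequences converging at infinity, up to equivalence. *)
Definition conv_infty (o : X) (u : nat -> X) : Prop :=
  forall M, exists N, forall n m, (N <= n)%nat -> (N <= m)%nat -> M <= gprod o (u n) (u m).

Definition equiv_infty (o : X) (u v : nat -> X) : Prop :=
  forall M, exists N, forall n m, (N <= n)%nat -> (N <= m)%nat -> M <= gprod o (u n) (v m).

(** u represents a point of the limit set Lambda(G): the boundary point of u
    is a limit of an orbit sequence g_n p. *)
Definition limit_set_pt (p : X) (G : (X -> X) -> Prop) (u : nat -> X) : Prop :=
  conv_infty p u /\
  exists g : nat -> X -> X, (forall n, G (g n)) /\
    conv_infty p (fun n => g n p) /\ equiv_infty p (fun n => g n p) u.

Definition non_elementary (p : X) (G : (X -> X) -> Prop) : Prop :=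
  exists u1 u2 u3, limit_set_pt p G u1 /\ limit_set_pt p G u2 /\ limit_set_pt p G u3 /\
    ~ equiv_infty p u1 u2 /\ ~ equiv_infty p u1 u3 /\ ~ equiv_infty p u2 u3.

Definition geodesic_line (gam : R -> X) : Prop :=
  forall s t, mdist (gam s) (gam t) = Rabs (s - t).

Definition QC_hull (p : X) (G : (X -> X) -> Prop) (y : X) : Prop :=
  exists gam : R -> X, geodesic_line gam /\ (exists t, gam t = y) /\
    limit_set_pt p G (fun n => gam (INR n)) /\
    limit_set_pt p G (fun n => gam (- INR n)).

Definition qc_cocompact (p : X) (G : (X -> X) -> Prop) (D : R) : Prop :=
  forall y y', QC_hull p G y -> QC_hull p G y' ->
    exists g, G g /\ mdist (g y) y' <= D.

Definition pack_le (Y : X -> Prop) (Rad r : R) (K : nat) : Prop :=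
  forall y, Y y -> forall l : list X, NoDup l ->
    (forall a, In a l -> Y a /\ mdist y a <= Rad) ->
    (forall a b, In a l -> In b l -> a <> b -> 2 * r < mdist a b) ->
    (length l <= K)%nat.

End Defs.

Definition in_M (delta D : R) (X : MetricSpace) (x : X) (G : (X -> X) -> Prop) : Prop :=
  proper_space X /\ geodesic_space X /\ hyperbolic X delta /\
  isom_subgroup X G /\ discrete_subgroup X G /\ torsion_free X G /\
  non_elementary X x G /\ qc_cocompact X x G D /\ QC_hull X x G x.

Definition Sigma (X : MetricSpace) (x : X) (G : (X -> X) -> Prop) (Rad : R) (g : X -> X) : Prop :=
  G g /\ mdist x (g x) <= Rad.

Definition eq_approx (X Y : MetricSpace) (x : X) (y : Y)
    (GX : (X -> X) -> Prop) (GY : (Y -> Y) -> Prop) (eps : R) : Prop :=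
  exists (f : X -> Y) (phi : (X -> X) -> (Y -> Y)) (psi : (Y -> Y) -> (X -> X)),
    f x = y /\
    (forall a, mdist x a < 1 / eps -> mdist y (f a) < 1 / eps) /\
    (forall a b, mdist x a < 1 / eps -> mdist x b < 1 / eps ->
       Rabs (mdist (f a) (f b) - mdist a b) < eps) /\
    (forall z, mdist y z < 1 / eps -> exists a, mdist x a < 1 / eps /\ mdist (f a) z < eps) /\
    (forall g, Sigma X x GX (1 / eps) g -> Sigma Y y GY (1 / eps) (phi g)) /\
    (forall g a, Sigma X x GX (1 / eps) g -> mdist x a < 1 / eps -> mdist x (g a) < 1 / eps ->
       mdist (f (g a)) (phi g (f a)) < eps) /\
    (forall g, Sigma Y y GY (1 / eps) g -> Sigma X x GX (1 / eps) (psi g)) /\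
    (forall g a, Sigma Y y GY (1 / eps) g -> mdist x a < 1 / eps -> mdist x (psi g a) < 1 / eps ->
       mdist (f (psi g a)) (g (f a)) < eps).

Definition eq_pGH_conv (X : nat -> MetricSpace) (x : forall n, X n)
    (G : forall n, (X n -> X n) -> Prop)
    (Xi : MetricSpace) (xi : Xi) (Gi : (Xi -> Xi) -> Prop) : Prop :=
  forall eps, 0 < eps -> exists N, forall n, (N <= n)%nat ->
    eq_approx (X n) Xi (x n) xi (G n) Gi eps.

From Stdlib Require Import Reals.
From Stdlib Require Import Lra Lia List ClassicalEpsilon Classical.
Open Scope R_scope.

(** The idea: a packing of [QC-Hull(Lambda(G_n))] inside a ball of radius [Rad]
    is moved by a group element (cocompactness with codiameter [D]) into the ball
    of radius [Rad + D] around the base point [x_n], isometrically.  So it suffices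
    to bound uniformly in [n] the size of [2r]-separated families in [B(x_n, Rad+D)].
    - For large [n], an equivariant [eps]-approximation with [eps <= r] and
      [Rad + D < 1/eps] sends such a family injectively to an [r]-separated family
      in [B(x_infty, 1/eps)]; in the proper limit space such families are of
      bounded size, because a compact ball admits a finite [r/2]-net.
    - The finitely many remaining [n] are handled by the same finiteness result
      in each proper space [X_n], taking a maximum. *)

Definition sep_count_le (X : MetricSpace) (c : X) (rho s : R) (K : nat) : Prop :=
  forall l : list X, NoDup l ->
    (forall a, In a l -> mdist c a <= rho) ->
    (forall a b, In a l -> In b l -> a <> b -> s < mdist a b) ->
    (length l <= K)%nat.

Lemma sep_count_le_mono (X : MetricSpace) (c : X) (rho s : R) (K K' : nat) :
  (K <= K')%nat -> sep_count_le X c rho s K -> sep_count_le X c rho s K'.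
Proof.
  intros HKK' HK l Hnd Hball Hsep. specialize (HK l Hnd Hball Hsep). lia.
Qed.

Lemma sep_count_le_map (X Y : MetricSpace) (c : Y) (rho s : R) (K : nat)
    (f : X -> Y) (l : list X) :
  sep_count_le Y c rho s K -> 0 <= s -> NoDup l ->
  (forall a, In a l -> mdist c (f a) <= rho) ->
  (forall a b, In a l -> In b l -> a <> b -> s < mdist (f a) (f b)) ->
  (length l <= K)%nat.
Proof.
  intros HK Hs Hnd Hball Hsep.
  assert (Hinj : forall a b, In a l -> In b l -> f a = f b -> a = b).
  { intros a b Ha Hb Heq. apply NNPP; intro Hne.
    pose proof (Hsep a b Ha Hb Hne) as Hab. rewrite Heq, mdist_refl in Hab. lra. }
  rewrite <- (length_map f l). apply HK.
  - apply NoDup_map_NoDup_ForallPairs; [exact Hinj | exact Hnd].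
  - intros a' Ha'. apply in_map_iff in Ha'. destruct Ha' as [a [<- Ha]]. auto.
  - intros a' b' Ha' Hb' Hne.
    apply in_map_iff in Ha'. destruct Ha' as [a [<- Ha]].
    apply in_map_iff in Hb'. destruct Hb' as [b [<- Hb]].
    apply Hsep; auto. intros ->. auto.
Qed.

(** Greedy construction of a separated family in a ball: [greedy n] lists [n]
    points, each chosen in [B(c, rho)] at distance [> s] from all earlier ones
    whenever such a point exists. *)
Section Greedy.
Variable X : MetricSpace.
Variable c : X.
Variable rho s : R.

Definition greedy_next (l : list X) : X :=
  epsilon (inhabits c) (fun p => mdist c p <= rho /\ forall m, In m l -> s < mdist p m).

Fixpoint greedy (n : nat) : list X :=
  match n with O => nil | S k => greedy_next (greedy k) :: greedy k end.

Lemma greedy_next_in (i j : nat) : (i < j)%nat -> In (greedy_next (greedy i)) (greedy j).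
Proof.
  induction j as [|j IH]; intros Hij; [lia|]. simpl.
  destruct (Nat.eq_dec i j) as [->|Hne]; [left; reflexivity | right; apply IH; lia].
Qed.
End Greedy.

(** In a proper space every closed ball has a finite [s]-net: otherwise the
    greedy construction never stops and yields an [s]-separated sequence in the
    ball, which has no convergent subsequence. *)
Lemma finite_net (X : MetricSpace) (hp : proper_space X) (c : X) (rho s : R) :
  0 < s ->
  exists net : list X, forall p, mdist c p <= rho -> exists m, In m net /\ mdist p m <= s.
Proof.
  intros Hs. apply NNPP; intro Hno_net.
  assert (Hescape : forall net : list X,
            exists p, mdist c p <= rho /\ forall m, In m net -> s < mdist p m).
  { intro net. apply NNPP; intro Hp. apply Hno_net. exists net. intros p Hpc.
    apply NNPP; intro Hm. apply Hp. exists p. split; [exact Hpc|]. intros m Hmin.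
    apply Rnot_le_lt. intro Hle. apply Hm. exists m; auto. }
  set (u := fun n => greedy_next X c rho s (greedy X c rho s n)).
  assert (Hu : forall n, mdist c (u n) <= rho /\
                 forall m, In m (greedy X c rho s n) -> s < mdist (u n) m).
  { intro n. unfold u, greedy_next. apply epsilon_spec, Hescape. }
  destruct (hp c rho u (fun n => proj1 (Hu n))) as [phi [l [Hphi Hcv]]].
  destruct (Hcv (s / 2)) as [N HN]; [lra|].
  pose proof (HN N (le_n _)) as HcloseN.
  pose proof (HN (S N) (Nat.le_succ_diag_r _)) as HcloseSN.
  assert (Hfar : s < mdist (u (phi (S N))) (u (phi N)))
    by exact (proj2 (Hu (phi (S N))) _ (greedy_next_in X c rho s _ _ (Hphi N))).
  pose proof (mdist_tri X (u (phi (S N))) l (u (phi N))) as Htri.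
  rewrite (mdist_sym X l (u (phi N))) in Htri. lra.
Qed.

(** Hence, in a proper space, [s]-separated families in a ball are uniformly
    bounded: distinct points of such a family have distinct nearest points in an
    [s/2]-net. *)
Lemma proper_sep_count (X : MetricSpace) (hp : proper_space X) (c : X) (rho s : R) :
  0 < s -> exists K, sep_count_le X c rho s K.
Proof.
  intros Hs. destruct (finite_net X hp c rho (s / 2)) as [net Hnet]; [lra|].
  exists (length net). intros l Hnd Hball Hsep.
  set (h := fun a => epsilon (inhabits c) (fun m => In m net /\ mdist a m <= s / 2)).
  assert (Hh : forall a, In a l -> In (h a) net /\ mdist a (h a) <= s / 2).
  { intros a Ha. unfold h. apply epsilon_spec, Hnet, Hball, Ha. }
  rewrite <- (length_map h l). apply NoDup_incl_length.
  - apply NoDup_map_NoDup_ForallPairs; [|exact Hnd].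
    intros a b Ha Hb Heq. apply NNPP; intro Hne.
    pose proof (Hsep a b Ha Hb Hne) as Hab.
    destruct (Hh a Ha) as [_ Ha2]. destruct (Hh b Hb) as [_ Hb2].
    pose proof (mdist_tri X a (h a) b) as Htri.
    rewrite Heq, (mdist_sym X (h b) b) in Htri. rewrite Heq in Ha2. lra.
  - intros m Hm. apply in_map_iff in Hm. destruct Hm as [a [<- Ha]]. apply Hh; auto.
Qed.

Lemma pack_le_of_cobounded (X : MetricSpace) (Y : X -> Prop) (x : X)
    (D Rad r : R) (K : nat) :
  0 <= r ->
  (forall y, Y y -> exists g, isometry X g /\ mdist (g y) x <= D) ->
  sep_count_le X x (Rad + D) (2 * r) K ->
  pack_le X Y Rad r K.
Proof.
  intros Hr Hmove HK y Hy l Hnd Hl Hsep.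
  destruct (Hmove y Hy) as [g [[Hgdist _] Hgy]].
  apply (sep_count_le_map X X x (Rad + D) (2 * r) K g l HK); [lra | exact Hnd | |].
  - intros a Ha. destruct (Hl a Ha) as [_ Hya].
    pose proof (mdist_tri X x (g y) (g a)) as Htri.
    rewrite Hgdist, (mdist_sym X x (g y)) in Htri. lra.
  - intros a b Ha Hb Hne. rewrite Hgdist. auto.
Qed.

Lemma hull_cobounded (delta D : R) (X : MetricSpace) (x : X) (G : (X -> X) -> Prop) :
  in_M delta D X x G ->
  forall y, QC_hull X x G y -> exists g, isometry X g /\ mdist (g y) x <= D.
Proof.
  intros (_ & _ & _ & [Hiso _] & _ & _ & _ & Hcc & Hx) y Hy.
  destruct (Hcc y x Hy Hx) as [g [Hg Hgy]]. exists g. auto.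
Qed.

Lemma approx_sep_count (X Y : MetricSpace) (x : X) (y : Y) GX GY
    (eps rho s s' : R) (K : nat) :
  eq_approx X Y x y GX GY eps -> rho < 1 / eps -> 0 <= s' -> s' + eps <= s ->
  sep_count_le Y y (1 / eps) s' K -> sep_count_le X x rho s K.
Proof.
  intros (f & _ & _ & _ & Hball & Hdist & _) Hrho Hs' Hss' HK l Hnd Hl Hsep.
  apply (sep_count_le_map X Y y (1 / eps) s' K f l HK Hs' Hnd).
  - intros a Ha. left. apply Hball. pose proof (Hl a Ha). lra.
  - intros a b Ha Hb Hne.
    pose proof (Hsep a b Ha Hb Hne). pose proof (Hl a Ha). pose proof (Hl b Hb).
    destruct (Rabs_def2 _ _ (Hdist a b ltac:(lra) ltac:(lra))). lra.
Qed.

Lemma small_scale (r M : R) : 0 < r -> exists eps, 0 < eps /\ eps <= r /\ M < 1 / eps.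
Proof.
  intros Hr. pose proof (Rmax_l M 0) as HMl. pose proof (Rmax_r M 0) as HMr.
  set (eps := Rmin r (/ (Rmax M 0 + 1))).
  assert (Hinv_pos : 0 < / (Rmax M 0 + 1)) by (apply Rinv_0_lt_compat; lra).
  assert (Heps : 0 < eps) by (apply Rmin_glb_lt; assumption).
  exists eps. split; [exact Heps | split; [apply Rmin_l|]].
  assert (Hle : eps <= / (Rmax M 0 + 1)) by apply Rmin_r.
  apply Rinv_le_contravar in Hle; [|exact Heps]. rewrite Rinv_inv in Hle.
  unfold Rdiv. rewrite Rmult_1_l. lra.
Qed.

Lemma common_bound_below (P : nat -> nat -> Prop) :
  (forall n K K', (K <= K')%nat -> P n K -> P n K') -> (forall n, exists K, P n K) ->
  forall N, exists K, forall n, (n < N)%nat -> P n K.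
Proof.
  intros Hmon Hex N; induction N as [|N [K HK]].
  - exists O; intros; lia.
  - destruct (Hex N) as [K' HK']. exists (Nat.max K K'). intros n Hn.
    destruct (Nat.eq_dec n N) as [->|Hne].
    + apply Hmon with K'; [lia | exact HK'].
    + apply Hmon with K; [lia | apply HK; lia].
Qed.

Theorem mainTheorem16 (delta D : R) (hdelta : 0 <= delta) (hD : 0 <= D)
  (X : nat -> MetricSpace) (x : forall n, X n) (G : forall n, (X n -> X n) -> Prop)
  (Xi : MetricSpace) (xi : Xi) (Gi : (Xi -> Xi) -> Prop)
  (hM : forall n, in_M delta D (X n) (x n) (G n))
  (hXi : proper_space Xi) (hGi : isom_subgroup Xi Gi) (hGicl : closed_subgroup Xi xi Gi)
  (hconv : eq_pGH_conv X x G Xi xi Gi)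
  (r Rad : R) (hr : 0 < r) (hrR : r <= Rad) :
  exists K : nat, forall n, pack_le (X n) (QC_hull (X n) (x n) (G n)) Rad r K.
Proof.
  destruct (small_scale r (Rad + D) hr) as (eps & Heps & Heps_r & Heps_inv).
  destruct (hconv eps Heps) as [N HN].
  destruct (proper_sep_count Xi hXi xi (1 / eps) r hr) as [Klim HKlim].
  assert (Hlarge : forall n, (N <= n)%nat -> sep_count_le (X n) (x n) (Rad + D) (2 * r) Klim).
  { intros n Hn.
    apply (approx_sep_count _ _ _ _ _ _ eps _ _ r _ (HN n Hn)); [lra | lra | lra | exact HKlim]. }
  destruct (common_bound_below (fun n K => sep_count_le (X n) (x n) (Rad + D) (2 * r) K))
    with (N := N) as [Ksmall HKsmall].
  { intros n K K'. apply sep_count_le_mono. }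
  { intro n. destruct (hM n) as [hp _]. apply proper_sep_count; [exact hp | lra]. }
  exists (Nat.max Klim Ksmall). intro n.
  apply (pack_le_of_cobounded _ _ (x n) D); [lra | exact (hull_cobounded delta D _ _ _ (hM n)) |].
  destruct (Compare_dec.le_lt_dec N n) as [Hn|Hn].
  - apply sep_count_le_mono with Klim; [lia | exact (Hlarge n Hn)].
  - apply sep_count_le_mono with Ksmall; [lia | exact (HKsmall n Hn)].
Qed.
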